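(* For the operator $A\colon c_c\to c_c$, $(Ax)_1=x_1$, $(Ax)_n=x_n-x_{n-1}$ ($n>1$), with adjoint $A^*\colon\ell^2\to\ell^2$, we have $$\partial(f\circ A)(0)=\{0\}\neq\emptyset=A^*\,\partial f(A0).$$
   Context: Let $c_c$ be the space of finitely supported real sequences with the $\ell^2$-norm; its dual is identified with $\ell^2$ via $\langle z,y\rangle=\sum_n z_ny_n$. Let $f\colon c_c\to\mathbb{R}$, $f(x)=\sum_{n=1}^\infty \frac{n^2}{2}(x_n-n^{-2})^2$. For convex $h\colon c_c\to(-\infty,\infty]$ and $x$ with $h(x)<\infty$, $\partial h(x)=\{z\in\ell^2:\forall y\in c_c:\ h(y)\ge h(x)+\langle z,y-x\rangle\}$. The adjoint $A^*\colon\ell^2\to\ell^2$ is defined by $\langle A^*z,x\rangle=\langle z,Ax\rangle$ for all $z\in\ell^2$, $x\in c_c$. *)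

From Stdlib Require Import Reals.
From Coquelicot Require Import Coquelicot.
Open Scope R_scope.

(* Sequences are nat -> R; index k stands for the paper's index n = k+1. *)
Definition seqR := nat -> R.

Definition cc (x : seqR) : Prop := exists N : nat, forall k, (N <= k)%nat -> x k = 0.

Definition ell2 (z : seqR) : Prop := ex_series (fun k => (z k) ^ 2).

Definition pairing (z y : seqR) : R := Series (fun k => z k * y k).

Definition zeroseq : seqR := fun _ => 0.
Definition seq_sub (x y : seqR) : seqR := fun k => x k - y k.

Definition fobj (x : seqR) : R :=
  Series (fun k => (INR (S k))^2 / 2 * (x k - / (INR (S k))^2) ^ 2).

Definition opA (x : seqR) : seqR :=
  fun k => match k with O => x O | S j => x (S j) - x j end.

Definition subdiff (h : seqR -> R) (x : seqR) (z : seqR) : Prop :=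
  ell2 z /\ forall y, cc y -> h y >= h x + pairing z (seq_sub y x).

Definition is_adjoint_image (z w : seqR) : Prop :=
  ell2 w /\ forall x, cc x -> pairing w x = pairing z (opA x).

Definition adjoint_image (S : seqR -> Prop) (w : seqR) : Prop :=
  exists z, S z /\ ell2 z /\ is_adjoint_image z w.

From Stdlib Require Import Reals Lra Lia FunctionalExtensionality.
From Coquelicot Require Import Coquelicot.
Open Scope R_scope.

(* Expanding the square, [f x = f 0 + sum_n (n^2/2 x_n^2 - x_n)] on [c_c].
   Since [sum_(k<=n) (A y)_k = y_n] vanishes for large [n], [f (A y) >= f 0]
   for every [y], so [0] is a subgradient of [f o A] at [0]; testing against
   [t e_k], for which [f (A (t e_k)) - f 0] is a pure quadratic in [t], shows
   it is the only one.  At [A 0 = 0], testing [f] against [t e_k] forces every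
   subgradient [z] of [f] to satisfy [z_k = -1] for all [k], which is not
   square summable: [partial f (A 0)] is empty. *)

Lemma sum_n_Sn_R (a : nat -> R) n : (sum_n a (S n) : R) = sum_n a n + a (S n).
Proof. now rewrite sum_Sn. Qed.

Lemma sum_n_eq0 (a : nat -> R) M :
  (forall j, (j <= M)%nat -> a j = 0) -> (sum_n a M : R) = 0.
Proof.
  induction M as [|M IH]; intros H.
  - rewrite sum_O; apply H; lia.
  - rewrite sum_n_Sn_R, IH by (intros; apply H; lia).
    rewrite H by lia; ring.
Qed.

Lemma sum_n_single (a : nat -> R) k M :
  (forall j, (j <= M)%nat -> j <> k -> a j = 0) -> (k <= M)%nat ->
  (sum_n a M : R) = a k.
Proof.
  induction M as [|M IH]; intros H HM.
  - rewrite sum_O; now replace k with 0%nat by lia.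
  - destruct (Nat.eq_dec k (S M)) as [->|Hk].
    + rewrite sum_n_Sn_R, sum_n_eq0 by (intros; apply H; lia); ring.
    + rewrite sum_n_Sn_R, IH; [| intros; apply H; lia | lia].
      rewrite (H (S M)) by lia; ring.
Qed.

Section FiniteSupport.

Variables (a : nat -> R) (M : nat).
Hypothesis a_vanish : forall k, (M < k)%nat -> a k = 0.

Lemma is_series_finite_support : is_series a (sum_n a M).
Proof.
  assert (stable : forall j, (sum_n a (M + j) : R) = sum_n a M).
  { induction j as [|j IH]; [now rewrite Nat.add_0_r|].
    rewrite Nat.add_succ_r, sum_n_Sn_R, IH, a_vanish by lia; ring. }
  assert (lim : is_lim_seq (sum_n a) (sum_n a M)).
  { apply (is_lim_seq_ext_loc (fun _ => sum_n a M)); [|apply is_lim_seq_const].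
    exists M; intros n Hn; replace n with (M + (n - M))%nat by lia.
    now rewrite stable. }
  exact lim.
Qed.

Lemma Series_finite_support : Series a = sum_n a M.
Proof. apply is_series_unique, is_series_finite_support. Qed.

Lemma ex_series_finite_support : ex_series a.
Proof. eexists; apply is_series_finite_support. Qed.

End FiniteSupport.

Lemma ex_series_inv_sqr : ex_series (fun k => / INR (S k) ^ 2).
Proof.
  set (b := fun k : nat => / INR (S k) - / INR (S (S k))).
  assert (partial_b : forall n, (sum_n b n : R) = 1 - / INR (S (S n))).
  { induction n as [|n IH].
    - rewrite sum_O; unfold b; simpl; field.
    - rewrite sum_n_Sn_R, IH; unfold b; ring. }
  assert (b_sum : is_lim_seq (sum_n b) 1).
  { apply (is_lim_seq_ext (fun n => 1 - / INR (S (S n)))); [intros; now rewrite partial_b|].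
    replace (Finite 1) with (Finite (1 - 0)) by (f_equal; ring).
    apply is_lim_seq_minus'; [apply is_lim_seq_const|].
    apply (is_lim_seq_inv _ p_infty); [|discriminate].
    apply (is_lim_seq_incr_1 (fun n => INR (S n))), (is_lim_seq_incr_1 INR).
    apply is_lim_seq_INR. }
  apply (@ex_series_le R_AbsRing R_CompleteNormedModule _ (fun k => 2 * b k)).
  2:{ apply (@ex_series_scal_l R_AbsRing R_CompleteNormedModule 2 b).
      exists 1; exact b_sum. }
  intros n; unfold b.
  assert (x_ge1 : 1 <= INR (S n)) by (apply (le_INR 1); lia).
  rewrite (S_INR (S n)); set (x := INR (S n)) in x_ge1 |- *.
  change (Rabs (/ x ^ 2) <= 2 * (/ x - / (x + 1))).
  rewrite Rabs_right by (apply Rle_ge, Rlt_le, Rinv_0_lt_compat; nra).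
  replace (2 * (/ x - / (x + 1))) with (/ (x * (x + 1) / 2)) by (field; lra).
  apply Rinv_le_contravar; nra.
Qed.

Definition fobj_weight (k : nat) : R := INR (S k) ^ 2 / 2.

Lemma fobj_weight_gt0 k : 0 < fobj_weight k.
Proof. unfold fobj_weight; pose proof (lt_0_INR (S k) ltac:(lia)); nra. Qed.

Lemma fobj_finite_support x M : (forall k, (M < k)%nat -> x k = 0) ->
  fobj x = fobj zeroseq + sum_n (fun k => fobj_weight k * x k ^ 2 - x k) M.
Proof.
  assert (split : forall (y : seqR) N, (forall k, (N < k)%nat -> y k = 0) ->
    fobj y = Series (fun k => / INR (S k) ^ 2 / 2)
             + sum_n (fun k => fobj_weight k * y k ^ 2 - y k) N).
  { intros y N Hy; unfold fobj.
    rewrite (Series_ext _ (fun k => / INR (S k) ^ 2 / 2 + (fobj_weight k * y k ^ 2 - y k))).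
    2:{ intros k; unfold fobj_weight; pose proof (lt_0_INR (S k) ltac:(lia)); field; lra. }
    rewrite Series_plus.
    - rewrite (Series_finite_support (fun k => fobj_weight k * y k ^ 2 - y k) N);
        [reflexivity|].
      intros k Hk; rewrite Hy by exact Hk; ring.
    - apply ex_series_scal_r, ex_series_inv_sqr.
    - apply (ex_series_finite_support _ N); intros k Hk; rewrite Hy by exact Hk; ring. }
  intros Hx; rewrite (split x M Hx), (split zeroseq 0%nat) by reflexivity.
  rewrite sum_O; unfold zeroseq; ring.
Qed.

Lemma opA_zeroseq : opA zeroseq = zeroseq.
Proof. apply functional_extensionality; intros [|j]; unfold zeroseq; simpl; ring. Qed.

Lemma seq_sub_zeroseq y : seq_sub y zeroseq = y.
Proof. apply functional_extensionality; intros j; unfold seq_sub, zeroseq; ring. Qed.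

Lemma sum_n_opA_quadratic_ge (w : nat -> R) (y : seqR) M :
  (forall k, 0 <= w k) -> sum_n (fun k => w k * opA y k ^ 2 - opA y k) M >= - y M.
Proof.
  intros w_ge0; induction M as [|M IH].
  - rewrite sum_O; simpl; pose proof (w_ge0 0%nat); nra.
  - rewrite sum_n_Sn_R; change (opA y (S M)) with (y (S M) - y M).
    pose proof (Rmult_le_pos _ _ (w_ge0 (S M)) (pow2_ge_0 (y (S M) - y M))); lra.
Qed.

Lemma fobj_opA_ge y : cc y -> fobj (opA y) >= fobj zeroseq.
Proof.
  intros [N HN].
  rewrite (fobj_finite_support _ N).
  2:{ intros [|k] Hk; [lia|]; simpl; rewrite !HN by lia; ring. }
  pose proof (sum_n_opA_quadratic_ge fobj_weight y N
                (fun k => Rlt_le _ _ (fobj_weight_gt0 k))) as sum_ge.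
  rewrite (HN N) in sum_ge by lia; lra.
Qed.

Definition unit_vec (k : nat) (t : R) : seqR :=
  fun j => if Nat.eq_dec j k then t else 0.

Lemma unit_vec_same k t : unit_vec k t k = t.
Proof. unfold unit_vec; destruct (Nat.eq_dec k k); congruence. Qed.

Lemma unit_vec_other k t j : j <> k -> unit_vec k t j = 0.
Proof. unfold unit_vec; destruct (Nat.eq_dec j k); congruence. Qed.

Lemma cc_unit_vec k t : cc (unit_vec k t).
Proof. exists (S k); intros; apply unit_vec_other; lia. Qed.

Lemma pairing_unit_vec z k t : pairing z (unit_vec k t) = z k * t.
Proof.
  unfold pairing.
  assert (off_k : forall j, j <> k -> z j * unit_vec k t j = 0).
  { intros j Hj; rewrite unit_vec_other by exact Hj; ring. }
  rewrite (Series_finite_support _ k) by (intros; apply off_k; lia).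
  rewrite (sum_n_single _ k k), unit_vec_same; [ring| |lia].
  intros j _; apply off_k.
Qed.

Lemma subdiff_zeroseq_unit_vec h z k t :
  subdiff h zeroseq z -> h (unit_vec k t) >= h zeroseq + z k * t.
Proof.
  intros [_ Hz]; specialize (Hz _ (cc_unit_vec k t)).
  now rewrite seq_sub_zeroseq, pairing_unit_vec in Hz.
Qed.

Lemma fobj_unit_vec k t :
  fobj (unit_vec k t) = fobj zeroseq + (fobj_weight k * t ^ 2 - t).
Proof.
  rewrite (fobj_finite_support _ k) by (intros; apply unit_vec_other; lia).
  rewrite (sum_n_single _ k k), unit_vec_same; [reflexivity| |lia].
  intros j _ Hj; rewrite unit_vec_other by exact Hj; ring.
Qed.

Lemma fobj_opA_unit_vec k t :
  fobj (opA (unit_vec k t))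
  = fobj zeroseq + (fobj_weight k + fobj_weight (S k)) * t ^ 2.
Proof.
  assert (Ak : opA (unit_vec k t) k = t).
  { destruct k; simpl; rewrite unit_vec_same; [|rewrite unit_vec_other by lia]; ring. }
  assert (ASk : opA (unit_vec k t) (S k) = - t).
  { simpl; rewrite unit_vec_same, unit_vec_other by lia; ring. }
  assert (A_other : forall j, j <> k -> j <> S k -> opA (unit_vec k t) j = 0).
  { intros [|j] Hk HSk; simpl; rewrite !unit_vec_other by lia; ring. }
  rewrite (fobj_finite_support _ (S k)) by (intros; apply A_other; lia).
  rewrite sum_n_Sn_R, (sum_n_single _ k k), Ak, ASk; [ring| |lia].
  intros j Hj Hjk; rewrite A_other by lia; ring.
Qed.

Lemma linear_le_quadratic_eq0 a C : (forall t, a * t <= C * t ^ 2) -> a = 0.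
Proof.
  intros H; set (K := Rabs C + 1).
  assert (C_lt : C < K) by (pose proof (RRle_abs C); unfold K; lra).
  assert (K_gt0 : 0 < K) by (pose proof (Rabs_pos C); unfold K; lra).
  set (e := / (2 * K)).
  assert (e_gt0 : 0 < e) by (apply Rinv_0_lt_compat; lra).
  assert (Ke : K * e = / 2) by (unfold e; field; lra).
  pose proof (H (e * a)) as Ht.
  assert (C * (e * a) ^ 2 <= K * (e * a) ^ 2)
    by (apply Rmult_le_compat_r; [apply pow2_ge_0 | lra]).
  assert (e * (a * a) <= 0) by nra.
  nra.
Qed.

Lemma subdiff_fobj_opA_zeroseq :
  subdiff (fun x => fobj (opA x)) zeroseq zeroseq.
Proof.
  split.
  - apply (ex_series_finite_support _ 0); intros; unfold zeroseq; ring.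
  - intros y Hy; rewrite opA_zeroseq, seq_sub_zeroseq; unfold pairing, zeroseq.
    rewrite (Series_ext _ (fun _ => 0)) by (intros; ring).
    rewrite (Series_finite_support _ 0), sum_O by reflexivity.
    pose proof (fobj_opA_ge y Hy); unfold zeroseq in *; lra.
Qed.

Lemma subdiff_fobj_opA_zeroseq_eq z :
  subdiff (fun x => fobj (opA x)) zeroseq z -> z = zeroseq.
Proof.
  intros Hz; apply functional_extensionality; intros k.
  apply (linear_le_quadratic_eq0 _ (fobj_weight k + fobj_weight (S k))); intros t.
  pose proof (subdiff_zeroseq_unit_vec _ _ k t Hz) as Ht.
  cbv beta in Ht; rewrite fobj_opA_unit_vec, opA_zeroseq in Ht; lra.
Qed.

Lemma subdiff_fobj_zeroseq_coef z :
  subdiff fobj zeroseq z -> forall k, z k = -1.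
Proof.
  intros Hz k; enough (z k + 1 = 0) by lra.
  apply (linear_le_quadratic_eq0 _ (fobj_weight k)); intros t.
  pose proof (subdiff_zeroseq_unit_vec _ _ k t Hz) as Ht.
  rewrite fobj_unit_vec in Ht; lra.
Qed.

Lemma ell2_const_eq0 c : ell2 (fun _ => c) -> c = 0.
Proof.
  intros Hc; apply ex_series_lim_0, is_lim_seq_unique in Hc.
  rewrite Lim_seq_const in Hc; injection Hc; intros; nra.
Qed.

Theorem mainTheorem11 :
  (forall z : seqR, subdiff (fun x => fobj (opA x)) zeroseq z <-> z = zeroseq)
  /\ (forall w : seqR, ~ adjoint_image (subdiff fobj (opA zeroseq)) w)
  /\ (exists z : seqR, subdiff (fun x => fobj (opA x)) zeroseq z).
Proof.
  split; [|split].
  - intros z; split; [apply subdiff_fobj_opA_zeroseq_eq|].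
    intros ->; apply subdiff_fobj_opA_zeroseq.
  - intros w [z [Hz [z_ell2 _]]]; rewrite opA_zeroseq in Hz.
    assert (z_const : z = fun _ => -1)
      by (apply functional_extensionality, subdiff_fobj_zeroseq_coef, Hz).
    rewrite z_const in z_ell2; apply ell2_const_eq0 in z_ell2; lra.
  - exists zeroseq; apply subdiff_fobj_opA_zeroseq.
Qed.
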